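(* In Spekkens' toy theory, for two toy bits $A$ and $S$, there is no reversible transformation $U$ such that $$U(0_A\otimes 0_S)=0_A\otimes 0_S\quad\text{and}\quad U(1_A\otimes 0_S)=0_A\otimes +_S .$$
   Context: A toy bit has four ontic states; identify them with $(q,p)\in\mathbb{Z}_2^2$, labelled $1=(0,0),2=(0,1),3=(1,0),4=(1,1)$. The toy states used are the sets of compatible ontic states $0=\{1,2\}$ ($q=0$), $1=\{3,4\}$ ($q=1$), $+=\{1,3\}$ ($p=0$). For two toy bits the ontic states are pairs (16 of them), ontic space $\mathbb{Z}_2^4$ with coordinates $(q_A,p_A,q_S,p_S)$, and $x_A\otimes y_S$ denotes the product set $x\times y$. Valid epistemic states of the pair are the sets $V^\perp+\vec v$ where $V\subseteq\mathbb{Z}_2^4$ is a subspace with $[\vec f,\vec g]=f_1g_2-f_2g_1+f_3g_4-f_4g_3=0$ (mod 2) for all $\vec f,\vec g\in V$, $\vec v\in\mathbb{Z}_2^4$, and $V^\perp=\{\vec m:\vec f^T\vec m=0\ \forall\vec f\in V\}$. A reversible transformation is a permutation of the 16 ontic states that maps every valid epistemic state to a valid epistemic state; it acts on epistemic states by mapping the set of compatible ontic states. *)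

From HB Require Import structures.
From mathcomp Require Import all_boot all_order all_algebra all_fingroup.
Set Implicit Arguments. Unset Strict Implicit. Unset Printing Implicit Defensive.
Import GRing.Theory.
Local Open Scope ring_scope.

(* Ontic states of one toy bit: (q,p) in Z_2^2. *)
Definition bit_ontic := ('F_2 * 'F_2)%type.

Definition toy0 : {set bit_ontic} := [set x | x.1 == 0].   (* {1,2}: q = 0 *)
Definition toy1 : {set bit_ontic} := [set x | x.1 == 1].   (* {3,4}: q = 1 *)
Definition toyplus : {set bit_ontic} := [set x | x.2 == 0]. (* {1,3}: p = 0 *)

(* Ontic states of two toy bits: Z_2^4 with coordinates (q_A,p_A,q_S,p_S)
   indexed 0,1,2,3. *)
Definition ontic := 'rV['F_2]_4.
Definition c (x : ontic) (i : nat) : 'F_2 := x 0 (inord i).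

Definition tensor (x y : {set bit_ontic}) : {set ontic} :=
  [set w : ontic | ((c w 0, c w 1) \in x) && ((c w 2, c w 3) \in y)].

Definition sympl (f g : ontic) : 'F_2 :=
  c f 0 * c g 1 - c f 1 * c g 0 + c f 2 * c g 3 - c f 3 * c g 2.

Definition dot (f m : ontic) : 'F_2 := \sum_(i < 4) f 0 i * m 0 i.

(* V is a (linear) subspace of Z_2^4 (over Z_2: contains 0, closed under +). *)
Definition is_subspace (V : {set ontic}) : Prop :=
  (0 \in V) /\ (forall f g, f \in V -> g \in V -> f + g \in V).

Definition isotropic (V : {set ontic}) : Prop :=
  forall f g, f \in V -> g \in V -> sympl f g = 0.

Definition perp (V : {set ontic}) : {set ontic} :=
  [set m : ontic | [forall f in V, dot f m == 0]].

Definition valid (S : {set ontic}) : Prop :=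
  exists (V : {set ontic}) (v : ontic),
    [/\ is_subspace V, isotropic V & S = [set m + v | m in perp V]].

Definition reversible (U : {perm ontic}) : Prop :=
  forall S, valid S -> valid (U @: S).

From mathcomp Require Import all_boot all_order all_algebra all_fingroup.

(* A permutation of the ontic states maps disjoint epistemic states to disjoint
   ones.  The states 0_A (x) 0_S and 1_A (x) 0_S are disjoint (q_A differs),
   whereas 0_A (x) 0_S and 0_A (x) +_S share the ontic state (0,0,0,0); so no
   permutation at all, reversible or not, realises both assignments. *)

Set Implicit Arguments.
Unset Strict Implicit.
Unset Printing Implicit Defensive.

Local Open Scope ring_scope.

Lemma tensor_toy0_toy1_disjoint (x y : {set bit_ontic}) :
  [disjoint tensor toy0 x & tensor toy1 y].
Proof.
apply/pred0P=> w; rewrite !inE /=.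
by apply/negP => /and3P [/andP [/eqP -> _]].
Qed.

Lemma zero_in_tensor (x y : {set bit_ontic}) :
  (0, 0) \in x -> (0, 0) \in y -> (0 : ontic) \in tensor x y.
Proof. by rewrite inE /c !mxE => -> ->. Qed.

Theorem corollary1 :
  ~ exists U : {perm ontic},
      [/\ reversible U,
          U @: tensor toy0 toy0 = tensor toy0 toy0
        & U @: tensor toy1 toy0 = tensor toy0 toyplus].
Proof.
case=> U [_ U00 U10].
have disjU : [disjoint tensor toy0 toy0 & tensor toy0 toyplus].
  by rewrite -U00 -U10 (imset_disjoint (@perm_inj _ U)) tensor_toy0_toy1_disjoint.
have zero00 : (0 : ontic) \in tensor toy0 toy0 by apply: zero_in_tensor; rewrite inE.
have zero0p : (0 : ontic) \in tensor toy0 toyplus by apply: zero_in_tensor; rewrite inE.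
by rewrite (disjointFr disjU zero00) in zero0p.
Qed.
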